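(* Let $\mathcal{A}$ and $\mathcal{B}$ be $C^{*}$-algebras, let $\Xi$ be a Hilbert $\mathcal{A}$-module and $\nabla$ a Hilbert $\mathcal{B}$-module. Let $p\in[0,1)$, let $\theta$ be a nonnegative real number and let $f:\Xi\rightarrow\nabla$ be a mapping such that $$\| f(\mu x+y)-\mu f(x)-f(y)\| \leq \theta\left(\|x\|^{p}+\|y\|^{p}\right)$$ and $$\| f(\langle x,y\rangle z)-\langle f(x),f(y)\rangle f(z)\| \leq \theta\left(\|x\|^{p}+\|y\|^{p}+\|z\|^{p}\right)$$ for all $x,y,z\in\Xi$ and all $\mu\in\mathbb{T}$. Then there exists a unique Hilbert $C^{*}$-module homomorphism $H:\Xi\rightarrow\nabla$ such that $$\|f(x)-H(x)\|\leq \frac{2\theta}{2-2^{p}}\|x\|^{p}$$ for all $x\in\Xi$.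
   Context: $\mathbb{T}=\{z\in\mathbb{C}:|z|=1\}$. For a $C^{*}$-algebra $\mathcal{A}$, a (left) Hilbert $\mathcal{A}$-module is a complex linear space $\Xi$ with a compatible left $\mathcal{A}$-module action ($\lambda(ax)=(\lambda a)x=a(\lambda x)$) and a map $\langle\cdot,\cdot\rangle:\Xi\times\Xi\to\mathcal{A}$ that is linear in the first variable, satisfies $\langle ax,y\rangle=a\langle x,y\rangle$, $\langle x,y\rangle^{*}=\langle y,x\rangle$, $\langle x,x\rangle\geq 0$ with equality iff $x=0$, and such that $\Xi$ is complete in the norm $\|x\|=\|\langle x,x\rangle\|^{1/2}$. For a Hilbert $\mathcal{A}$-module $\Xi$ and a Hilbert $\mathcal{B}$-module $\nabla$, a Hilbert $C^{*}$-module homomorphism is a $\mathbb{C}$-linear map $H:\Xi\to\nabla$ with $H(\langle x,y\rangle z)=\langle H(x),H(y)\rangle H(z)$ for all $x,y,z\in\Xi$. *)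

From HB Require Import structures.
From mathcomp Require Import all_boot all_order all_algebra.
From mathcomp Require Import complex.
From mathcomp Require Import all_classical all_reals all_analysis.
Set Implicit Arguments. Unset Strict Implicit. Unset Printing Implicit Defensive.
Import Order.TTheory GRing.Theory Num.Theory.
Import numFieldNormedType.Exports.
Local Open Scope ring_scope.

(* Real-valued norm of an element of a normed complex vector space
   (the norm `|x| : R[i] is always a nonnegative real; we take its real part). *)
Definition nrm (R : realType) (V : normedModType R[i]) (x : V) : R :=
  complex.Re `|x|.

Definition is_Cstar_algebra (R : realType) (A : completeNormedModType R[i])
    (mul : A -> A -> A) (star : A -> A) : Prop :=
  (forall a b c, mul a (mul b c) = mul (mul a b) c) /\
      (forall a b c, mul (a + b) c = mul a c + mul b c) /\
      (forall a b c, mul a (b + c) = mul a b + mul a c) /\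
      (forall (l : R[i]) a b, mul (l *: a) b = l *: mul a b
                              /\ mul a (l *: b) = l *: mul a b) /\
      (forall a, star (star a) = a) /\
      (forall a b, star (a + b) = star a + star b) /\
      (forall (l : R[i]) a, star (l *: a) = (l^*)%C *: star a) /\
      (forall a b, star (mul a b) = mul (star b) (star a)) /\
      (forall a b, nrm (mul a b) <= nrm a * nrm b)/\
      (forall a, nrm (mul (star a) a) = nrm a ^+ 2).

Definition cstar_positive (R : realType) (A : completeNormedModType R[i])
    (mul : A -> A -> A) (star : A -> A) (a : A) : Prop :=
  exists b, a = mul (star b) b.

Definition is_Hilbert_module (R : realType) (A : completeNormedModType R[i])
    (mul : A -> A -> A) (star : A -> A)
    (X : completeNormedModType R[i]) (act : A -> X -> X) (ip : X -> X -> A)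
    : Prop :=
  (forall a b x, act (a + b) x = act a x + act b x) /\
      (forall a x y, act a (x + y) = act a x + act a y) /\
      (forall a b x, act (mul a b) x = act a (act b x)) /\
      (forall (l : R[i]) a x, l *: act a x = act (l *: a) x
                              /\ l *: act a x = act a (l *: x)) /\
      (forall x y z, ip (x + y) z = ip x z + ip y z) /\
      (forall (l : R[i]) x y, ip (l *: x) y = l *: ip x y) /\
      (forall a x y, ip (act a x) y = mul a (ip x y)) /\
      (forall x y, star (ip x y) = ip y x) /\
      (forall x, cstar_positive mul star (ip x x) /\ (ip x x = 0 -> x = 0))/\
      (forall x, nrm x = Num.sqrt (nrm (ip x x))).

Definition is_Hilbert_hom (R : realType)
    (A B : completeNormedModType R[i])
    (X Y : completeNormedModType R[i])
    (actX : A -> X -> X) (ipX : X -> X -> A)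
    (actY : B -> Y -> Y) (ipY : Y -> Y -> B) (H : X -> Y) : Prop :=
  (forall x y, H (x + y) = H x + H y) /\
      (forall (l : R[i]) x, H (l *: x) = l *: H x)/\
      (forall x y z, H (actX (ipX x y) z) = actY (ipY (H x) (H y)) (H z)).

(* Hyers' direct method.  The doubling estimate
   ||f(2u) - 2 f(u)|| <= 2 theta ||u||^p  makes  H x = lim 2^-n f(2^n x)  a
   geometric Cauchy sequence of ratio q = 2^p / 2 < 1, whose limit lies within
   2 theta ||x||^p / (2 - 2^p) of f x.  Rescaling the hypotheses by 2^n and dividing
   by 2^n, the errors become O(q^n): hence H is additive and commutes with
   unimodular scalars, which forces C-linearity, and H(<x,y>z) = <f x, f y> H z.
   Replacing x, then y, by 2^n x, 2^n y and using the linearity of H together with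
   ||<u,v> w|| <= 4 ||u|| ||v|| ||w|| (from polarization) turns this into
   H(<x,y>z) = <H x, H y> H z.  Any linear map within O(||x||^p) of f is H, since
   the same rescaling shows their distance at x is O(q^n) for every n. *)

From HB Require Import structures.
From mathcomp Require Import all_boot all_order all_algebra.
From mathcomp Require Import complex.
From mathcomp Require Import all_classical all_reals all_analysis.
From mathcomp Require Import ring lra.
Import Order.TTheory GRing.Theory Num.Theory.
Import numFieldNormedType.Exports.

Local Open Scope complex_scope.
Local Open Scope classical_set_scope.
Local Open Scope ring_scope.
Set Implicit Arguments. Unset Strict Implicit. Unset Printing Implicit Defensive.

Section RealNorm.
Variables (R : realType) (V : normedModType R[i]).
Implicit Types (x y : V) (l : R[i]).

Lemma normc_nrm x : `|x| = (nrm x)%:C.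
Proof.
have := normr_ge0 x; rewrite /nrm lecE /= => /andP[/eqP Im0 _].
by case: `|x| Im0 => a b /= ->.
Qed.

Lemma nrm_ge0 x : 0 <= nrm x.
Proof. by have := normr_ge0 x; rewrite normc_nrm lecR. Qed.

Lemma ler_nrmD x y : nrm (x + y) <= nrm x + nrm y.
Proof. by have := ler_normD x y; rewrite !normc_nrm -rmorphD lecR. Qed.

Lemma nrmZ l x : nrm (l *: x) = complex.Re `|l| * nrm x.
Proof.
rewrite /nrm normrZ [`|x|]normc_nrm.
have := normr_ge0 l; rewrite lecE /= => /andP[/eqP Im0 _].
by case: `|l| Im0 => a b /= ->; rewrite !mulr0 subr0.
Qed.

Lemma nrmZ_unit l x : `|l| = 1 -> nrm (l *: x) = nrm x.
Proof. by move=> l1; rewrite nrmZ l1 mul1r. Qed.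

Lemma nrmZr (r : R) x : nrm (r%:C *: x) = `|r| * nrm x.
Proof. by rewrite nrmZ normc_def /= expr0n /= addr0 sqrtr_sqr. Qed.

Lemma nrm0 : nrm (0 : V) = 0.
Proof. by rewrite /nrm normr0. Qed.

Lemma nrm0_eq0 x : nrm x = 0 -> x = 0.
Proof. by move=> x0; apply/normr0_eq0; rewrite normc_nrm x0. Qed.

Lemma nrmN x : nrm (- x) = nrm x.
Proof. by rewrite /nrm normrN. Qed.

Lemma nrm_distC x y : nrm (x - y) = nrm (y - x).
Proof. by rewrite -nrmN opprB. Qed.

Lemma ler_nrm_distD x y z : nrm (x - z) <= nrm (x - y) + nrm (y - z).
Proof. by rewrite -[x - z](subrKA y) ler_nrmD. Qed.

End RealNorm.

Section GeometricConvergence.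
Variables (R : realType) (V : normedModType R[i]).
Implicit Types (u : nat -> V) (c q : R).

Lemma near_geometric_le c q : 0 <= q < 1 -> forall e, 0 < e ->
  \forall n \near \oo, c * q ^+ n <= e.
Proof.
move=> /andP[q0 q1] e e0.
have /cvgr_dist_le/(_ e e0) : c * q ^+ n @[n --> \oo] --> 0.
  by apply: cvg_geometric; rewrite ger0_norm.
by apply: filterS => n; rewrite sub0r normrN; apply: le_trans (ler_norm _).
Qed.

Lemma nrm_lim_le u (L v : V) (b : R) : u @ \oo --> L ->
  (\forall n \near \oo, nrm (v - u n) <= b) -> nrm (v - L) <= b.
Proof.
move=> uL ub; apply/ler_addgt0Pr => e e0.
have e0' : (0 : R[i]) < e%:C by rewrite ltcR.
have /cvgr_dist_lt/(_ _ e0') uLe := uL.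
have [n [vun Lun]] := filter_ex (filterI ub uLe).
rewrite normc_nrm ltcR nrm_distC in Lun.
by apply: le_trans (ler_nrm_distD v (u n) L) _; rewrite lerD // ltW.
Qed.

Lemma geometric_dist_cvg u (v : V) c q : 0 <= q < 1 ->
  (forall n, nrm (v - u n) <= c * q ^+ n) -> u @ \oo --> v.
Proof.
move=> q01 uv; apply/cvgrPdist_le => e.
rewrite ltcE => /andP[/eqP e_real e0].
apply: filterS (near_geometric_le c q01 e0) => n cqe.
rewrite normc_nrm lecE /= e_real eqxx /=.
exact: le_trans (uv n) cqe.
Qed.

Lemma eq_geometric_dist (v w : V) c q : 0 <= q < 1 ->
  (forall n, nrm (v - w) <= c * q ^+ n) -> w = v.
Proof.
move=> q01 vw.
have wv : (fun=> w) @ \oo --> v by apply: geometric_dist_cvg q01 vw.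
exact: cvg_unique (cvg_cst w) wv.
Qed.

Lemma geometric_dist_le u c q : 0 <= q < 1 ->
  (forall n, nrm (u n.+1 - u n) <= c * q ^+ n) ->
  forall n m, (n <= m)%N -> nrm (u n - u m) <= c * q ^+ n / (1 - q).
Proof.
move=> /andP[q0 q1] uS.
have c0 : 0 <= c by rewrite -[c]mulr1 -(expr0 q); apply: le_trans (uS 0%N); apply: nrm_ge0.
have q1' : 0 < 1 - q by rewrite subr_gt0.
have partial n k : nrm (u (n + k)%N - u n) <= c * q ^+ n * (1 - q ^+ k) / (1 - q).
  elim: k => [|k IHk]; first by rewrite addn0 subrr nrm0 expr0 subrr mulr0 mul0r.
  rewrite addnS; apply: le_trans (ler_nrm_distD _ (u (n + k)%N) _) _.
  apply: le_trans (lerD (uS (n + k)%N) IHk) _.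
  by rewrite exprD exprS le_eqVlt; apply/orP; left; apply/eqP; field; rewrite gt_eqF.
move=> n m /subnKC <-; rewrite nrm_distC; apply: le_trans (partial n (m - n)%N) _.
rewrite ler_pM2r ?invr_gt0 // -[leRHS]mulr1 ler_wpM2l ?mulr_ge0 ?exprn_ge0 //.
by rewrite lerBlDr lerDl exprn_ge0.
Qed.

End GeometricConvergence.

Lemma geometric_cauchy_cvg (R : realType) (V : completeNormedModType R[i])
    (u : nat -> V) (c q : R) : 0 <= q < 1 ->
  (forall n, nrm (u n.+1 - u n) <= c * q ^+ n) ->
  exists2 L, u @ \oo --> L & forall n, nrm (u n - L) <= c * q ^+ n / (1 - q).
Proof.
move=> q01 uS; have := geometric_dist_le q01 uS => uu.
have /andP[_ q1] := q01; have q1' : 0 < 1 - q by rewrite subr_gt0.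
have : cvg (u @ \oo).
  apply/cauchy_cvgP/cauchy_exP => e; rewrite ltcE => /andP[/eqP e_real e0].
  have [N _ cqN] := near_geometric_le (c / (1 - q)) q01 (divr_gt0 e0 (ltr0n _ 2)).
  exists (u N), N => // m /= Nm.
  rewrite -ball_normE /ball_ /= normc_nrm ltcE /= e_real eqxx /=.
  apply: le_lt_trans (uu _ _ Nm) _; rewrite mulrAC; apply: le_lt_trans (cqN N (leqnn N)) _.
  by rewrite ltr_pdivrMr // ltr_pMr // ltr1n.
move=> /cvg_ex[L uL]; exists L => // n.
by apply: nrm_lim_le uL _; apply: filterS (nbhs_infty_ge n) => m /uu.
Qed.

Section Polarization.
Variables (R : realType) (W : lmodType R[i]).

(* Coordinates with respect to four fixed vectors, so that polarization
   reduces to identities between scalar coefficients. *)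
Definition comb4 (a b d e : W) (k1 k2 k3 k4 : R[i]) : W :=
  k1 *: a + k2 *: b + k3 *: d + k4 *: e.

Lemma comb4D a b d e k1 k2 k3 k4 l1 l2 l3 l4 :
  comb4 a b d e k1 k2 k3 k4 + comb4 a b d e l1 l2 l3 l4 =
  comb4 a b d e (k1 + l1) (k2 + l2) (k3 + l3) (k4 + l4).
Proof.
rewrite /comb4 !scalerDl addrACA; congr (_ + _).
by rewrite addrACA; congr (_ + _); rewrite addrACA.
Qed.

Lemma comb4Z a b d e s k1 k2 k3 k4 :
  s *: comb4 a b d e k1 k2 k3 k4 = comb4 a b d e (s * k1) (s * k2) (s * k3) (s * k4).
Proof. by rewrite /comb4 !scalerDr !scalerA. Qed.

Lemma comb4B a b d e k1 k2 k3 k4 l1 l2 l3 l4 :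
  comb4 a b d e k1 k2 k3 k4 - comb4 a b d e l1 l2 l3 l4 =
  comb4 a b d e (k1 - l1) (k2 - l2) (k3 - l3) (k4 - l4).
Proof. by rewrite -scaleN1r comb4Z comb4D !mulN1r. Qed.

Lemma polarization (Q : R[i] -> W) (a b d e : W) :
  (forall c, Q c = comb4 a b d e 1 c^* c (c * c^*)) ->
  4%:R *: b = (Q 1 - Q (-1)) + 'i *: (Q 'i - Q (- 'i)).
Proof.
move=> QE; rewrite !QE !comb4B comb4Z comb4D.
have -> : 4%:R *: b = comb4 a b d e 0 4%:R 0 0 by rewrite /comb4 !scale0r add0r !addr0.
congr comb4; simpc => //.
by rewrite -[LHS](rmorph_nat (real_complex R)) /=; congr Complex; lra.
Qed.

End Polarization.

Section HilbertModule.
Variables (R : realType) (A : completeNormedModType R[i]).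
Variables (mul : A -> A -> A) (star : A -> A).
Variables (X : completeNormedModType R[i]) (act : A -> X -> X) (ip : X -> X -> A).
Hypotheses (hA : is_Cstar_algebra mul star) (hX : is_Hilbert_module mul star act ip).
Implicit Types (a b : A) (x y z u v : X) (l : R[i]).

Lemma starD a b : star (a + b) = star a + star b.
Proof. by case: hA => _ [_ [_ [_ [_ [+ _]]]]]. Qed.
Lemma starZ l a : star (l *: a) = (l^*)%C *: star a.
Proof. by case: hA => _ [_ [_ [_ [_ [_ [+ _]]]]]]. Qed.
Lemma starK a : star (star a) = a.
Proof. by case: hA => _ [_ [_ [_ [+ _]]]]. Qed.
Lemma starM a b : star (mul a b) = mul (star b) (star a).
Proof. by case: hA => _ [_ [_ [_ [_ [_ [_ [+ _]]]]]]]. Qed.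
Lemma ler_nrmM a b : nrm (mul a b) <= nrm a * nrm b.
Proof. by case: hA => _ [_ [_ [_ [_ [_ [_ [_ [+ _]]]]]]]]. Qed.
Lemma nrm_cstar a : nrm (mul (star a) a) = nrm a ^+ 2.
Proof. by case: hA => _ [_ [_ [_ [_ [_ [_ [_ [_ +]]]]]]]]. Qed.

Lemma actDl a b x : act (a + b) x = act a x + act b x.
Proof. by case: hX. Qed.
Lemma actDr a x y : act a (x + y) = act a x + act a y.
Proof. by case: hX => _ [+ _]. Qed.
Lemma actZl l a x : act (l *: a) x = l *: act a x.
Proof. by case: hX => _ [_ [_ [/(_ l a x)[-> _] _]]]. Qed.
Lemma actZr l a x : act a (l *: x) = l *: act a x.
Proof. by case: hX => _ [_ [_ [/(_ l a x)[_ ->] _]]]. Qed.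
Lemma ipDl x y z : ip (x + y) z = ip x z + ip y z.
Proof. by case: hX => _ [_ [_ [_ [+ _]]]]. Qed.
Lemma ipZl l x y : ip (l *: x) y = l *: ip x y.
Proof. by case: hX => _ [_ [_ [_ [_ [+ _]]]]]. Qed.
Lemma ip_actl a x y : ip (act a x) y = mul a (ip x y).
Proof. by case: hX => _ [_ [_ [_ [_ [_ [+ _]]]]]]. Qed.
Lemma star_ip x y : star (ip x y) = ip y x.
Proof. by case: hX => _ [_ [_ [_ [_ [_ [_ [+ _]]]]]]]. Qed.
Lemma nrm_ipxx x : nrm (ip x x) = nrm x ^+ 2.
Proof.
by case: hX => _ [_ [_ [_ [_ [_ [_ [_ [_ ->]]]]]]]]; rewrite sqr_sqrtr // nrm_ge0.
Qed.

Lemma nrm_star a : nrm (star a) = nrm a.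
Proof.
suff ler_nrm_star b : nrm b <= nrm (star b).
  by apply/le_anti; rewrite ler_nrm_star -{2}(starK a) ler_nrm_star.
have [->|b_neq0] := eqVneq (nrm b) 0; first exact: nrm_ge0.
have := ler_nrmM (star b) b; rewrite nrm_cstar expr2.
by rewrite ler_pM2r // lt0r b_neq0 nrm_ge0.
Qed.

Lemma actBl a b x : act (a - b) x = act a x - act b x.
Proof. by rewrite actDl -scaleN1r actZl scaleN1r. Qed.
Lemma actBr a x y : act a (x - y) = act a x - act a y.
Proof. by rewrite actDr -scaleN1r actZr scaleN1r. Qed.
Lemma ipDr x y z : ip z (x + y) = ip z x + ip z y.
Proof. by rewrite -star_ip ipDl starD !star_ip. Qed.
Lemma ipZr l x y : ip x (l *: y) = (l^*)%C *: ip x y.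
Proof. by rewrite -star_ip ipZl starZ star_ip. Qed.
Lemma ipBl x y z : ip (x - y) z = ip x z - ip y z.
Proof. by rewrite ipDl -scaleN1r ipZl scaleN1r. Qed.
Lemma ipBr x y z : ip z (x - y) = ip z x - ip z y.
Proof. by rewrite ipDr -scaleN1r ipZr rmorphN1 scaleN1r. Qed.

Lemma ler_nrm_act a x : nrm (act a x) <= nrm a * nrm x.
Proof.
have ipE : ip (act a x) (act a x) = mul a (mul (ip x x) (star a)).
  by rewrite ip_actl -star_ip ip_actl starM star_ip.
suff : nrm (act a x) ^+ 2 <= (nrm a * nrm x) ^+ 2.
  by rewrite ler_pXn2r // ?nnegrE ?mulr_ge0 ?nrm_ge0.
rewrite -nrm_ipxx ipE exprMn -nrm_ipxx expr2 -mulrA.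
apply: le_trans (ler_nrmM _ _) _; rewrite ler_wpM2l ?nrm_ge0 //.
by apply: le_trans (ler_nrmM _ _) _; rewrite nrm_star mulrC.
Qed.

Lemma ip_expand c u v : ip (u + c *: v) (u + c *: v) =
  comb4 (ip u u) (ip u v) (ip v u) (ip v v) 1 c^* c (c * c^*).
Proof.
rewrite /comb4 scale1r !ipDl !ipDr !ipZl !ipZr scalerA addrA.
by congr (_ + _); rewrite mulrC.
Qed.

Lemma ler_nrm_ip_sqr u v : nrm (ip u v) <= (nrm u + nrm v) ^+ 2.
Proof.
have unit_le c : `|c| = 1 -> nrm (ip (u + c *: v) (u + c *: v)) <= (nrm u + nrm v) ^+ 2.
  move=> c1; rewrite nrm_ipxx ler_pXn2r ?nnegrE ?addr_ge0 ?nrm_ge0 //.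
  by apply: le_trans (ler_nrmD _ _) _; rewrite nrmZ_unit.
have normi : `|'i : R[i]| = 1 by rewrite normc_def /= expr0n expr1n add0r sqrtr1.
have nrm4 : nrm ((4%:R : R[i]) *: ip u v) = 4%:R * nrm (ip u v) by rewrite nrmZ normr_nat.
rewrite -(@ler_pM2l _ 4%:R) // -nrm4 (polarization (fun c => ip_expand c u v)).
apply: le_trans (ler_nrmD _ _) _; rewrite nrmZ_unit //.
have diff_le c : `|c| = 1 -> nrm (ip (u + c *: v) (u + c *: v) - ip (u + (- c) *: v) (u + (- c) *: v))
    <= 2%:R * (nrm u + nrm v) ^+ 2.
  move=> c1; apply: le_trans (ler_nrmD _ _) _; rewrite nrmN mulr2n mulrDl mul1r.
  by rewrite lerD // unit_le // normrN.
have := diff_le 1 (normr1 _); have := diff_le 'i normi; lra.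
Qed.

Lemma ler_nrm_ip u v : nrm (ip u v) <= 4%:R * nrm u * nrm v.
Proof.
have [u0|u_neq0] := eqVneq (nrm u) 0.
  have ip0v : ip 0 v = 0 by rewrite -(subrr v) ipBl subrr.
  by rewrite (nrm0_eq0 u0) ip0v !nrm0 mulr0 mul0r.
have [v0|v_neq0] := eqVneq (nrm v) 0.
  have ipu0 : ip u 0 = 0 by rewrite -(subrr u) ipBr subrr.
  by rewrite (nrm0_eq0 v0) ipu0 !nrm0 mulr0.
have u_gt0 : 0 < nrm u by rewrite lt0r u_neq0 nrm_ge0.
have v_gt0 : 0 < nrm v by rewrite lt0r v_neq0 nrm_ge0.
(* Rescale [u] and [v] so that they get the same norm [sqrt (nrm u * nrm v)]. *)
set t := Num.sqrt (nrm v / nrm u).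
have t_gt0 : 0 < t by rewrite sqrtr_gt0 divr_gt0.
have t2 : t ^+ 2 = nrm v / nrm u by rewrite sqr_sqrtr // ltW // divr_gt0.
have -> : ip u v = ip (t%:C *: u) (t^-1%:C *: v).
  by rewrite ipZl ipZr conjc_real scalerA -rmorphM mulfV ?gt_eqF // scale1r.
apply: le_trans (ler_nrm_ip_sqr _ _) _.
rewrite !nrmZr !ger0_norm ?invr_ge0 ?(ltW t_gt0) // sqrrD !exprMn exprVn t2.
rewrite le_eqVlt; apply/orP; left; apply/eqP; field.
by rewrite -/(nrm u) -/(nrm v) u_neq0 v_neq0 gt_eqF.
Qed.

Lemma ler_nrm_act_ip u v w :
  nrm (act (ip u v) w) <= 4%:R * nrm u * nrm v * nrm w.
Proof.
apply: le_trans (ler_nrm_act _ _) _.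
by rewrite ler_wpM2r ?nrm_ge0 ?ler_nrm_ip.
Qed.

End HilbertModule.

Section UnitScalable.
Variables (R : realType) (U V : lmodType R[i]) (h : U -> V).
Hypothesis hD : {morph h : x y / x + y}.
Hypothesis hZ_unit : forall (mu : R[i]) x, `|mu| = 1 -> h (mu *: x) = mu *: h x.

Let h0 : h 0 = 0.
Proof. by apply: (addrI (h 0)); rewrite -hD !addr0. Qed.

Lemma unit_scalable_natZ (n : nat) x : h (n%:R *: x) = n%:R *: h x.
Proof.
elim: n => [|n IHn]; first by rewrite !scale0r h0.
by rewrite -natr1 !scalerDl !scale1r hD IHn.
Qed.

(* A real [r] with [|r| < 1] is [w + w^*] for a unimodular [w]. *)
Lemma unit_scalable_small_realZ (r : R) x : `|r| < 1 -> h (r%:C *: x) = r%:C *: h x.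
Proof.
move=> r_lt1.
have r2 : 0 <= 1 - r ^+ 2 / 4%:R.
  have : r ^+ 2 <= 1 by rewrite -real_normK ?num_real // expr_le1 // ltW.
  by rewrite subr_ge0 ler_pdivrMr // mul1r; lra.
set w : R[i] := Complex (r / 2%:R) (Num.sqrt (1 - r ^+ 2 / 4%:R)).
have w1 : `|w| = 1.
  rewrite normc_def /= sqr_sqrtr // -(rmorph1 (real_complex R)); congr (_%:C).
  by rewrite -[RHS]sqrtr1; congr Num.sqrt; rewrite exprMn exprVn; field.
have wc1 : `|w^*| = 1 by rewrite normcJ.
have -> : r%:C = w + w^*.
  by apply/eqP; rewrite eq_complex /= subrr eqxx andbT; apply/eqP; field.
by rewrite !scalerDl hD !hZ_unit.
Qed.

Lemma unit_scalable_realZ (r : R) x : h (r%:C *: x) = r%:C *: h x.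
Proof.
set N := Num.Def.archi_bound r.
have r_ltN : `|r| < N%:R by apply: unstable.ltr_norm_bound.
have N_gt0 : (0 : R) < N%:R by apply: le_lt_trans r_ltN.
have -> : r%:C = (N%:R : R[i]) * (r / N%:R)%:C.
  by rewrite -(rmorph_nat (real_complex R)) -rmorphM; congr (_%:C); field; rewrite gt_eqF.
rewrite -!scalerA unit_scalable_natZ unit_scalable_small_realZ //.
by rewrite normrM normfV (ger0_norm (ltW N_gt0)) ltr_pdivrMr // mul1r.
Qed.

Lemma unit_scalable_scalable : scalable h.
Proof.
move=> l x; have normi : `|'i : R[i]| = 1.
  by rewrite normc_def /= expr0n expr1n add0r sqrtr1.
rewrite [l]complexE scalerDl hD mulrC -scalerA !unit_scalable_realZ hZ_unit //.
by rewrite scalerA -scalerDl [_ * 'i%C]mulrC.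
Qed.

End UnitScalable.

Lemma powR_exprn (R : realType) (a r : R) (n : nat) :
  0 <= a -> powR (a ^+ n) r = powR a r ^+ n.
Proof. by move=> a0; rewrite -powR_mulrn // powRAC powR_mulrn // powR_ge0. Qed.

Lemma powR_lt_self (R : realType) (a r : R) : 1 < a -> r < 1 -> powR a r < a.
Proof.
move=> a_gt1 r_lt1; have a_pos : a \in Num.pos by rewrite posrE (lt_trans ltr01).
rewrite /powR ifF ?gt_eqF ?(lt_trans ltr01) //.
by rewrite -[ltRHS](lnK a_pos) ltr_expR gtr_pMl // ln_gt0.
Qed.

Section DyadicRatio.
Variables (R : realType) (p : R).
Hypotheses (hp0 : 0 <= p) (hp1 : p < 1).

Definition dyadic_ratio : R := powR 2 p / 2.
Local Notation q := dyadic_ratio.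

Lemma dyadic_ratio_ge0 : 0 <= q.
Proof. by rewrite divr_ge0 ?powR_ge0. Qed.

Lemma dyadic_ratio_lt1 : q < 1.
Proof. by rewrite ltr_pdivrMr // mul1r powR_lt_self // ltr1n. Qed.

Lemma dyadic_ratio_01 : 0 <= q < 1.
Proof. by rewrite dyadic_ratio_ge0 dyadic_ratio_lt1. Qed.

Lemma exprn_dyadic_ratio n : q ^+ n = 2 ^- n * powR 2 p ^+ n.
Proof. by rewrite exprMn exprVn mulrC. Qed.

Lemma ler_dyadic_ratio n (a b : R) : 0 <= a -> 0 <= b ->
  2 ^- n * (a + powR 2 p ^+ n * b) <= (a + b) * q ^+ n.
Proof.
move=> a0 b0; have P_ge1 : 1 <= powR 2 p ^+ n.
  by apply: exprn_ege1; have := ler_powR (ler1n R 2) hp0; rewrite powRr0.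
have s_ge0 : 0 <= 2 ^- n :> R by rewrite invr_ge0 exprn_ge0.
rewrite exprn_dyadic_ratio; set s := 2 ^- n in s_ge0 *; set P := powR 2 p ^+ n in P_ge1 *.
have : 0 <= a * (s * (P - 1)) by rewrite !mulr_ge0 // subr_ge0.
nra.
Qed.

End DyadicRatio.

Lemma nrm_dyadicZ (R : realType) (V : normedModType R[i]) n (x : V) :
  nrm ((2 ^+ n)%:C *: x) = 2 ^+ n * nrm x.
Proof. by rewrite nrmZr ger0_norm // exprn_ge0. Qed.

Lemma powR_nrm_dyadicZ (R : realType) (V : normedModType R[i]) (p : R) n (x : V) :
  powR (nrm ((2 ^+ n)%:C *: x)) p = powR 2 p ^+ n * powR (nrm x) p.
Proof. by rewrite nrm_dyadicZ powRM ?exprn_ge0 ?nrm_ge0 // powR_exprn. Qed.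

Lemma dyadicZK (R : realType) (V : lmodType R[i]) n (v : V) :
  (2 ^- n)%:C *: ((2 ^+ n)%:C *: v) = v.
Proof. by rewrite scalerA -rmorphM mulVf ?expf_neq0 // scale1r. Qed.

Section Hyers.
Variables (R : realType) (X : normedModType R[i]) (Y : completeNormedModType R[i]).
Variables (p theta : R) (f : X -> Y).
Hypothesis hp1 : p < 1.
Hypothesis hf : forall (mu : R[i]) (x y : X), `|mu| = 1 ->
  nrm (f (mu *: x + y) - mu *: f x - f y) <= theta * (powR (nrm x) p + powR (nrm y) p).
Local Notation q := (dyadic_ratio p).

Definition hyers_seq (x : X) (n : nat) : Y := (2 ^- n)%:C *: f ((2 ^+ n)%:C *: x).
Definition hyers (x : X) : Y := lim (hyers_seq x @ \oo).
Local Notation g := hyers_seq.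
Local Notation H := hyers.

Lemma hyers_seqS_dist x n : nrm (g x n.+1 - g x n) <= theta * powR (nrm x) p * q ^+ n.
Proof.
set u := (2 ^+ n)%:C *: x.
have -> : g x n.+1 - g x n = (2 ^- n.+1)%:C *: (f (1 *: u + u) - 1 *: f u - f u).
  have two_u : (2 ^+ n.+1)%:C *: x = u + u.
    by rewrite exprS rmorphM -scalerA rmorphD rmorph1 scalerDl scale1r.
  rewrite /g two_u !scale1r -addrA -opprD scalerBr; congr (_ - _).
  rewrite -/u -mulr2n -[f u *+ 2]scaler_nat scalerA; congr (_ *: _).
  rewrite -[2 : R[i]](rmorph_nat (real_complex R)) -rmorphM; congr (_%:C).
  by rewrite exprS; field; rewrite expf_neq0.
rewrite nrmZr ger0_norm ?invr_ge0 ?exprn_ge0 //.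
apply: le_trans (ler_wpM2l _ (hf _ _ (normr1 _))) _; first by rewrite invr_ge0 exprn_ge0.
rewrite /u powR_nrm_dyadicZ exprn_dyadic_ratio exprS invfM.
by rewrite le_eqVlt; apply/orP; left; apply/eqP; field.
Qed.

Lemma hyers_seq_dist x n :
  nrm (H x - g x n) <= theta * powR (nrm x) p / (1 - q) * q ^+ n.
Proof.
have [L gL gLd] := geometric_cauchy_cvg (dyadic_ratio_01 hp1) (hyers_seqS_dist x).
by rewrite /H (cvg_lim (@norm_hausdorff _ Y) gL) nrm_distC mulrAC.
Qed.

Lemma hyers_approx x : nrm (f x - H x) <= 2 * theta / (2 - powR 2 p) * powR (nrm x) p.
Proof.
have := hyers_seq_dist x 0; rewrite nrm_distC /g expr0 invr1 scale1r scale1r expr0 mulr1.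
move/le_trans; apply; rewrite le_eqVlt; apply/orP; left; apply/eqP.
rewrite /dyadic_ratio; field.
by rewrite subr_eq0 gt_eqF // powR_lt_self // ltr1n.
Qed.

Lemma hyers_near x (c : R) (v : Y) :
  (forall n, nrm (v - g x n) <= c * q ^+ n) -> H x = v.
Proof.
move=> vg; apply: (eq_geometric_dist (c := c + theta * powR (nrm x) p / (1 - q)))
  (dyadic_ratio_01 hp1) _ => n.
by apply: le_trans (ler_nrm_distD _ (g x n) _) _; rewrite mulrDl lerD // nrm_distC hyers_seq_dist.
Qed.

Lemma hyers_unit_linear (mu : R[i]) x y : `|mu| = 1 -> H (mu *: x + y) = mu *: H x + H y.
Proof.
move=> mu1; set a := powR (nrm x) p; set b := powR (nrm y) p.
apply: (hyers_near (c := (theta * a + theta * b) / (1 - q) + theta * (a + b))) => n.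
apply: le_trans (ler_nrm_distD _ (mu *: g x n + g y n) _) _.
rewrite !mulrDl lerD //.
  have -> : mu *: H x + H y - (mu *: g x n + g y n) = mu *: (H x - g x n) + (H y - g y n).
    by rewrite scalerBr addrACA opprD.
  by apply: le_trans (ler_nrmD _ _) _; rewrite nrmZ_unit // lerD ?hyers_seq_dist.
set x' := (2 ^+ n)%:C *: x; set y' := (2 ^+ n)%:C *: y.
rewrite nrm_distC; have -> : g (mu *: x + y) n - (mu *: g x n + g y n) =
    (2 ^- n)%:C *: (f (mu *: x' + y') - mu *: f x' - f y').
  rewrite /g scalerDr !scalerA [_ * mu]mulrC -!scalerA -/x' -/y'.
  by rewrite !scalerBr opprD addrA; congr (_ - _ - _); rewrite !scalerA mulrC.
rewrite nrmZr ger0_norm ?invr_ge0 ?exprn_ge0 //.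
apply: le_trans (ler_wpM2l _ (hf _ _ mu1)) _; first by rewrite invr_ge0 exprn_ge0.
rewrite !powR_nrm_dyadicZ exprn_dyadic_ratio -/a -/b.
by rewrite le_eqVlt; apply/orP; left; apply/eqP; ring.
Qed.

Lemma hyers_additive : {morph H : x y / x + y}.
Proof. by move=> x y; have := hyers_unit_linear x y (normr1 _); rewrite !scale1r. Qed.

Lemma hyers_scalable : scalable H.
Proof.
apply: unit_scalable_scalable hyers_additive _ => mu x mu1.
have H0 : H 0 = 0 by apply: (addrI (H 0)); rewrite -hyers_additive !addr0.
by have := hyers_unit_linear x 0 mu1; rewrite !addr0 H0 addr0.
Qed.

Lemma hyers_unique (H' : X -> Y) (C : R) : scalable H' ->
  (forall x, nrm (f x - H' x) <= C * powR (nrm x) p) -> H' = H.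
Proof.
move=> H'Z H'f; apply: funext => x; symmetry.
apply: (hyers_near (c := C * powR (nrm x) p)) => n.
have -> : H' x - g x n = (2 ^- n)%:C *: (H' ((2 ^+ n)%:C *: x) - f ((2 ^+ n)%:C *: x)).
  by rewrite H'Z scalerBr dyadicZK.
rewrite nrmZr ger0_norm ?invr_ge0 ?exprn_ge0 // nrm_distC.
apply: le_trans (ler_wpM2l _ (H'f _)) _; first by rewrite invr_ge0 exprn_ge0.
rewrite powR_nrm_dyadicZ exprn_dyadic_ratio.
by rewrite le_eqVlt; apply/orP; left; apply/eqP; ring.
Qed.

End Hyers.

Section ModuleHom.
Variables (R : realType).
Variables (A : completeNormedModType R[i]) (mulA : A -> A -> A) (starA : A -> A).
Variables (B : completeNormedModType R[i]) (mulB : B -> B -> B) (starB : B -> B).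
Variables (X : completeNormedModType R[i]) (actX : A -> X -> X) (ipX : X -> X -> A).
Variables (Y : completeNormedModType R[i]) (actY : B -> Y -> Y) (ipY : Y -> Y -> B).
Hypotheses (hA : is_Cstar_algebra mulA starA) (hB : is_Cstar_algebra mulB starB).
Hypotheses (hX : is_Hilbert_module mulA starA actX ipX)
  (hY : is_Hilbert_module mulB starB actY ipY).
Variables (p theta : R) (f : X -> Y).
Hypotheses (hp0 : 0 <= p) (hp1 : p < 1) (htheta : 0 <= theta).
Hypothesis h1 : forall (mu : R[i]) (x y : X), `|mu| = 1 ->
  nrm (f (mu *: x + y) - mu *: f x - f y) <= theta * (powR (nrm x) p + powR (nrm y) p).
Hypothesis h2 : forall x y z : X,
  nrm (f (actX (ipX x y) z) - actY (ipY (f x) (f y)) (f z))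
    <= theta * (powR (nrm x) p + powR (nrm y) p + powR (nrm z) p).
Local Notation q := (dyadic_ratio p).
Local Notation g := (hyers_seq f).
Local Notation H := (hyers f).
Local Notation K x := (theta * powR (nrm x) p / (1 - q)).

Lemma hyers_act_ip x y z : H (actX (ipX x y) z) = actY (ipY (f x) (f y)) (H z).
Proof.
set a := ipX x y; set b := ipY (f x) (f y).
set S := powR (nrm x) p + powR (nrm y) p.
apply: (hyers_near hp1 h1 (c := nrm b * K z + theta * (S + powR (nrm z) p))) => n.
apply: le_trans (ler_nrm_distD _ (actY b (g z n)) _) _; rewrite mulrDl lerD //.
  rewrite -(actBr hY); apply: le_trans (ler_nrm_act hB hY _ _) _.
  by rewrite -mulrA ler_wpM2l ?nrm_ge0 ?hyers_seq_dist.
set z' := (2 ^+ n)%:C *: z.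
have -> : actY b (g z n) - g (actX a z) n =
    - ((2 ^- n)%:C *: (f (actX a z') - actY b (f z'))).
  by rewrite /g (actZr hY) (actZr hX) scalerBr opprB.
rewrite nrmN nrmZr ger0_norm ?invr_ge0 ?exprn_ge0 //.
apply: le_trans (ler_wpM2l _ (h2 _ _ _)) _; first by rewrite invr_ge0 exprn_ge0.
rewrite powR_nrm_dyadicZ -/S mulrCA -mulrA ler_wpM2l //.
by rewrite ler_dyadic_ratio ?addr_ge0 ?powR_ge0.
Qed.

Lemma hyers_act_ip_l x y z : H (actX (ipX x y) z) = actY (ipY (H x) (f y)) (H z).
Proof.
have E n : H (actX (ipX x y) z) = actY (ipY (g x n) (f y)) (H z).
  have := hyers_act_ip ((2 ^+ n)%:C *: x) y z.
  rewrite (ipZl hX) (actZl hX) (hyers_scalable hp1 h1) => E.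
  by rewrite -(dyadicZK n (H _)) E (ipZl hY) (actZl hY).
apply: (eq_geometric_dist (c := 4%:R * K x * nrm (f y) * nrm (H z)) (dyadic_ratio_01 hp1)) => n.
rewrite (E n) -(actBl hY) -(ipBl hY); apply: le_trans (ler_nrm_act_ip hB hY _ _ _) _.
have -> : 4%:R * K x * nrm (f y) * nrm (H z) * q ^+ n =
    4%:R * (K x * q ^+ n) * nrm (f y) * nrm (H z) by ring.
do 2 apply: (ler_wpM2r (nrm_ge0 _)).
by apply: ler_wpM2l; rewrite ?hyers_seq_dist.
Qed.

Lemma hyers_act_ip_lr x y z : H (actX (ipX x y) z) = actY (ipY (H x) (H y)) (H z).
Proof.
have E n : H (actX (ipX x y) z) = actY (ipY (H x) (g y n)) (H z).
  have := hyers_act_ip_l x ((2 ^+ n)%:C *: y) z.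
  rewrite (ipZr hA hX) conjc_real (actZl hX) (hyers_scalable hp1 h1) => E.
  by rewrite -(dyadicZK n (H _)) E (ipZr hB hY) conjc_real (actZl hY).
apply: (eq_geometric_dist (c := 4%:R * nrm (H x) * K y * nrm (H z)) (dyadic_ratio_01 hp1)) => n.
rewrite (E n) -(actBl hY) -(ipBr hB hY); apply: le_trans (ler_nrm_act_ip hB hY _ _ _) _.
have -> : 4%:R * nrm (H x) * K y * nrm (H z) * q ^+ n =
    4%:R * nrm (H x) * (K y * q ^+ n) * nrm (H z) by ring.
apply: (ler_wpM2r (nrm_ge0 _)); apply: ler_wpM2l; rewrite ?hyers_seq_dist //.
by rewrite mulr_ge0 ?nrm_ge0.
Qed.

Lemma hyers_Hilbert_hom : is_Hilbert_hom actX ipX actY ipY H.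
Proof.
split; first exact: (hyers_additive hp1 h1).
by split; [exact: (hyers_scalable hp1 h1) | exact: hyers_act_ip_lr].
Qed.

End ModuleHom.

Theorem corollary2p3 (R : realType)
  (A : completeNormedModType R[i]) (mulA : A -> A -> A) (starA : A -> A)
  (B : completeNormedModType R[i]) (mulB : B -> B -> B) (starB : B -> B)
  (X : completeNormedModType R[i]) (actX : A -> X -> X) (ipX : X -> X -> A)
  (Y : completeNormedModType R[i]) (actY : B -> Y -> Y) (ipY : Y -> Y -> B)
  (hA : is_Cstar_algebra mulA starA) (hB : is_Cstar_algebra mulB starB)
  (hX : is_Hilbert_module mulA starA actX ipX)
  (hY : is_Hilbert_module mulB starB actY ipY)
  (p theta : R) (hp0 : 0 <= p) (hp1 : p < 1) (htheta : 0 <= theta)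
  (f : X -> Y)
  (h1 : forall (mu : R[i]) (x y : X), `|mu| = 1 ->
          nrm (f (mu *: x + y) - mu *: f x - f y)
            <= theta * (powR (nrm x) p + powR (nrm y) p))
  (h2 : forall x y z : X,
          nrm (f (actX (ipX x y) z) - actY (ipY (f x) (f y)) (f z))
            <= theta * (powR (nrm x) p + powR (nrm y) p + powR (nrm z) p)) :
  exists! H : X -> Y,
    is_Hilbert_hom actX ipX actY ipY H /\
    (forall x : X, nrm (f x - H x) <= 2 * theta / (2 - powR 2 p) * powR (nrm x) p).
Proof.
exists (hyers f); split.
  split; [exact (hyers_Hilbert_hom hA hB hX hY hp0 hp1 htheta h1 h2) |].
  exact (hyers_approx hp1 h1).
move=> H' [[_ [H'Z _]] H'f]; symmetry.
exact (hyers_unique hp1 h1 H'Z H'f).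
Qed.
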